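(* Let $R$ be a Noetherian local ring, $M$ a finitely generated $R$-module, and $J=\operatorname{Ann}_R(M)$. For any finitely generated $R$-module $N$ the following are equivalent: (i) $M^{\oplus\mu_R(N)}\cong M\otimes_RN$; (ii) all entries of a minimal presentation matrix of $N$ lie in $J$ (that is, $\operatorname{Fitt}_{\mu_R(N)-1}(N)\subseteq J$); (iii) $L^{\oplus\mu_R(N)}\cong L\otimes_RN$ for every $R$-module $L$ with $\operatorname{Ann}_R(L)\supseteq J$; (iv) $(R/J)^{\oplus\mu_R(N)}\cong N/JN$.
   Context: $\mu_R(N)$ denotes the minimal number of generators of $N$. A minimal presentation of $N$ is an exact sequence $R^{\oplus b}\xrightarrow{A}R^{\oplus\mu_R(N)}\to N\to0$ with $A$ having entries in $\mathfrak m$. *)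

From HB Require Import structures.
From mathcomp Require Import all_boot all_order all_algebra.
Set Implicit Arguments. Unset Strict Implicit. Unset Printing Implicit Defensive.
Import Order.TTheory GRing.Theory Num.Theory.
Local Open Scope ring_scope.

Section CommAlg.
Variable R : comUnitRingType.

Definition is_ideal (I : R -> Prop) : Prop :=
  I 0 /\ (forall x y, I x -> I y -> I (x + y)) /\ (forall a x, I x -> I (a * x)).

Definition noetherian : Prop :=
  forall I : R -> Prop, is_ideal I ->
    exists n (g : 'I_n -> R), forall x,
      I x <-> exists c : 'I_n -> R, x = \sum_(i < n) c i * g i.

(* local ring: the non-units form an ideal (the maximal ideal m) *)
Definition local_ring : Prop :=
  forall x y : R, x \isn't a GRing.unit -> y \isn't a GRing.unit ->
    (x + y) \isn't a GRing.unit.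

Definition maxideal (x : R) : Prop := x \isn't a GRing.unit.

Definition generated_by (M : lmodType R) n (g : 'I_n -> M) : Prop :=
  forall x : M, exists c : 'I_n -> R, x = \sum_(i < n) c i *: g i.

Definition fin_gen (M : lmodType R) : Prop := exists n (g : 'I_n -> M), generated_by g.

Definition is_mu (M : lmodType R) (n : nat) : Prop :=
  (exists g : 'I_n -> M, generated_by g) /\
  (forall k (g : 'I_k -> M), generated_by g -> (n <= k)%N).

Definition Ann (M : lmodType R) (r : R) : Prop := forall x : M, r *: x = 0.

Definition ideal_mul_sub (J : R -> Prop) (N : lmodType R) (x : N) : Prop :=
  exists n (c : 'I_n -> R) (y : 'I_n -> N),
    (forall i, J (c i)) /\ x = \sum_(i < n) c i *: y i.

Definition iso (A B : lmodType R) : Prop :=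
  exists f : {linear A -> B}, bijective f.

Definition dsum (M : lmodType R) (n : nat) : lmodType R := {ffun 'I_n -> M}.

(* Q is (a model of) the quotient N / S : a surjective linear map with kernel S *)
Definition is_quotient (N Q : lmodType R) (S : N -> Prop) : Prop :=
  exists f : {linear N -> Q}, (forall q, exists x, f x = q) /\
    (forall x, f x = 0 <-> S x).

Definition bilinear (M N P : lmodType R) (f : M -> N -> P) : Prop :=
  (forall a x x' y, f (a *: x + x') y = a *: f x y + f x' y) /\
  (forall a x y y', f x (a *: y + y') = a *: f x y + f x y').

(* (T, b) is (a model of) the tensor product M (x)_R N : universal property *)
Definition is_tensor (M N T : lmodType R) (b : M -> N -> T) : Prop :=
  bilinear b /\
  forall (P : lmodType R) (f : M -> N -> P), bilinear f ->
    exists g : {linear T -> P},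
      (forall x y, f x y = g (b x y)) /\
      (forall g' : {linear T -> P}, (forall x y, f x y = g' (b x y)) ->
         forall t, g' t = g t).

(* minimal presentation R^b --A--> R^n --p--> N --> 0, entries of A in m;
   row-vector convention: the first map is u |-> u *m A *)
Definition min_presentation (N : lmodType R) (n b : nat)
  (A : 'M[R]_(b, n)) : Prop :=
  is_mu N n /\ (forall i j, maxideal (A i j)) /\
  exists p : {linear 'rV[R]_n -> N},
    (forall y, exists u, p u = y) /\
    (forall u, p u = 0 <-> exists v : 'rV[R]_b, u = v *m A).

End CommAlg.

From Pilot Require Import Defs.
From HB Require Import structures.
From mathcomp Require Import all_boot all_order all_algebra.
From Stdlib Require Import ClassicalEpsilon FunctionalExtensionality PropExtensionality.
Set Implicit Arguments. Unset Strict Implicit. Unset Printing Implicit Defensive.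
Import GRing.Theory.
Local Open Scope ring_scope.

(* Everything rests on one computation: if R^b --A--> R^mu -->> N presents N,
   then L (x) N is L^mu modulo the relations sum_j A j i *: w j
   (presentation_tensor).  Hence
   - if the entries of A kill L, then L^mu = L (x) N (dsum_tensor_of_ann),
     which gives (ii) -> (iii);
   - if L^mu = L (x) N with L finitely generated, the quotient map
     L^mu -->> L (x) N = L^mu is a surjective endomorphism, hence injective
     (Vasconcelos, via the ascending chain condition), so the relations
     vanish and the entries of A kill L (ann_of_dsum_tensor).  For L = M this
     is (i) -> (ii), for L = R/J it is (iv) -> (ii), since R/J (x) N = N/JN
     (quot_tensor_universal) and Ann(R/J) = J. *)

Lemma surj_section (A B : Type) (f : A -> B) :
  (forall y, exists x, f x = y) -> {g : B -> A | cancel g f}.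
Proof.
move=> fsurj.
exists (fun y => proj1_sig (constructive_indefinite_description _ (fsurj y))).
by move=> y; case: constructive_indefinite_description.
Qed.

Section Submodules.
Variable R : comUnitRingType.

Definition submod (V : lmodType R) (S : V -> Prop) : Prop :=
  S 0 /\ (forall x y, S x -> S y -> S (x + y)) /\ (forall a x, S x -> S (a *: x)).

Definition fg_submod (V : lmodType R) (S : V -> Prop) : Prop :=
  exists k (w : 'I_k -> V), (forall j, S (w j)) /\
    forall x, S x -> exists c : 'I_k -> R, x = \sum_j c j *: w j.

Section SubmodTheory.
Variables (V : lmodType R) (S : V -> Prop).
Hypothesis S_submod : submod S.

Lemma submod0 : S 0. Proof. by case: S_submod. Qed.
Lemma submodD x y : S x -> S y -> S (x + y). Proof. by case: S_submod => _ []; auto. Qed.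
Lemma submodZ a x : S x -> S (a *: x). Proof. by case: S_submod => _ []; auto. Qed.
Lemma submodB x y : S x -> S y -> S (x - y).
Proof. by move=> Sx Sy; rewrite -scaleN1r; apply/submodD/submodZ. Qed.

Lemma submod_sum I (r : seq I) (F : I -> V) :
  (forall i, S (F i)) -> S (\sum_(i <- r) F i).
Proof.
move=> SF; elim: r => [|i r IH]; first by rewrite big_nil; apply: submod0.
by rewrite big_cons; apply: submodD.
Qed.

Lemma submod_span k (c : 'I_k -> R) (w : 'I_k -> V) :
  (forall j, S (w j)) -> S (\sum_j c j *: w j).
Proof. by move=> Sw; apply: submod_sum => j; apply: submodZ. Qed.

(* The quotient V / S, realised on canonical representatives chosen by
   Hilbert's epsilon; [quot_proj] is the canonical projection. *)
Definition canon (x : V) : V := epsilon (inhabits 0) (fun y => S (x - y)).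

Lemma canon_diff x : S (x - canon x).
Proof.
apply: (epsilon_spec (inhabits (0 : V)) (fun y => S (x - y))).
by exists x; rewrite subrr; apply: submod0.
Qed.

Lemma canonP x : S (canon x - x).
Proof. by rewrite -opprB -scaleN1r; apply/submodZ/canon_diff. Qed.

Lemma canon_eq x y : S (x - y) -> canon x = canon y.
Proof.
move=> Sxy; rewrite /canon; congr epsilon; apply: functional_extensionality => z.
apply: propositional_extensionality; split => Sz.
  by have := submodB Sz Sxy; rewrite opprB addrC addrA subrK.
by have := submodD Sxy Sz; rewrite addrA subrK.
Qed.

Lemma canon_idem x : canon (canon x) == canon x.
Proof. by apply/eqP/canon_eq/canonP. Qed.

Definition quot : Type := {x : V | canon x == x}.
HB.instance Definition _ := Choice.on quot.

Definition quot_proj (x : V) : quot := exist _ (canon x) (canon_idem x).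

Lemma quot_projK (q : quot) : quot_proj (sval q) = q.
Proof. by apply: val_inj => /=; apply/eqP; case: q. Qed.

Lemma quot_proj_eq x y : quot_proj x = quot_proj y <-> S (x - y).
Proof.
split=> [/(congr1 sval) /= e | Sxy]; last by apply: val_inj; apply: canon_eq.
by have := submodB (canonP y) (canonP x); rewrite e opprB addrC addrA subrK.
Qed.

Definition quot_add (a b : quot) := quot_proj (sval a + sval b).
Definition quot_opp (a : quot) := quot_proj (- sval a).
Definition quot_scale (r : R) (a : quot) := quot_proj (r *: sval a).

Lemma quot_addE x y : quot_add (quot_proj x) (quot_proj y) = quot_proj (x + y).
Proof. by apply/quot_proj_eq; rewrite opprD addrACA; apply: submodD; apply: canonP. Qed.
Lemma quot_oppE x : quot_opp (quot_proj x) = quot_proj (- x).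
Proof. by apply/quot_proj_eq; rewrite opprK addrC; apply: canon_diff. Qed.
Lemma quot_scaleE r x : quot_scale r (quot_proj x) = quot_proj (r *: x).
Proof. by apply/quot_proj_eq; rewrite -scalerBr; apply: submodZ; apply: canonP. Qed.

Ltac elim_quot q := rewrite -(quot_projK q); move: (sval q) => {q}.

Lemma quot_addA : associative quot_add.
Proof.
move=> a b c; elim_quot a => a; elim_quot b => b; elim_quot c => c.
by rewrite !quot_addE addrA.
Qed.
Lemma quot_addC : commutative quot_add.
Proof. by move=> a b; elim_quot a => a; elim_quot b => b; rewrite !quot_addE addrC. Qed.
Lemma quot_add0 : left_id (quot_proj 0) quot_add.
Proof. by move=> a; elim_quot a => a; rewrite quot_addE add0r. Qed.
Lemma quot_addN : left_inverse (quot_proj 0) quot_opp quot_add.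
Proof. by move=> a; elim_quot a => a; rewrite quot_oppE quot_addE addNr. Qed.

HB.instance Definition _ :=
  GRing.isZmodule.Build quot quot_addA quot_addC quot_add0 quot_addN.

Lemma quot_scaleA a b v : quot_scale a (quot_scale b v) = quot_scale (a * b) v.
Proof. by elim_quot v => v; rewrite !quot_scaleE scalerA. Qed.
Lemma quot_scale1 : left_id 1 quot_scale.
Proof. by move=> v; elim_quot v => v; rewrite quot_scaleE scale1r. Qed.
Lemma quot_scaleDr : right_distributive quot_scale +%R.
Proof.
move=> a u v; elim_quot u => u; elim_quot v => v.
by rewrite /GRing.add /= quot_addE !quot_scaleE quot_addE scalerDr.
Qed.
Lemma quot_scaleDl v : {morph quot_scale^~ v : a b / a + b}.
Proof.
move=> a b; elim_quot v => v.
by rewrite /GRing.add /= !quot_scaleE quot_addE scalerDl.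
Qed.

HB.instance Definition _ :=
  GRing.Zmodule_isLmodule.Build R quot quot_scaleA quot_scale1 quot_scaleDr quot_scaleDl.

Lemma quot_proj_linear : linear quot_proj.
Proof. by move=> a x y; rewrite /GRing.scale /GRing.add /= quot_scaleE quot_addE. Qed.
HB.instance Definition _ :=
  GRing.isLinear.Build R V quot *:%R quot_proj quot_proj_linear.

Lemma quotient_exists : exists Q : lmodType R, is_quotient Q S.
Proof.
exists quot, quot_proj; split=> [q | x]; first by exists (sval q); apply: quot_projK.
have -> : 0 = quot_proj 0 by [].
by rewrite quot_proj_eq subr0.
Qed.

End SubmodTheory.
End Submodules.

Section LinearMaps.
Variable R : comUnitRingType.
Implicit Types A B C V P Q : lmodType R.

Definition mklin A B (f : A -> B) (f_lin : linear f) : {linear A -> B} :=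
  HB.pack f (GRing.isLinear.Build R A B *:%R f f_lin).

Lemma comp_linear A B C (f : {linear A -> B}) (g : {linear B -> C}) :
  linear (fun x => g (f x)).
Proof. by move=> a x y; rewrite !linearP. Qed.

Lemma iso_trans A B C : iso A B -> iso B C -> iso A C.
Proof.
case=> f [f' fK f'K] [g [g' gK g'K]].
by exists (mklin (comp_linear f g)), (fun z => f' (g' z)) => x /=;
  rewrite ?gK ?fK ?f'K ?g'K.
Qed.

Lemma iso_sym A B : iso A B -> iso B A.
Proof.
case=> f [f' fK f'K].
have f'_lin : linear f' by move=> a x y; apply: (can_inj fK); rewrite linearP !f'K.
by exists (mklin f'_lin), f.
Qed.

Lemma submod_ker A B (f : {linear A -> B}) : submod (fun x => f x = 0).
Proof.
split; first exact: linear0.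
by split=> [x y fx fy | a x fx]; rewrite ?linearD ?linearZZ ?fx ?fy ?addr0 ?scaler0.
Qed.

Lemma iso_of_linear A B (f : {linear A -> B}) :
  (forall y, exists x, f x = y) -> (forall x, f x = 0 -> x = 0) -> iso A B.
Proof.
move=> /surj_section [g gK] fker; exists f, g => // x; apply/eqP.
by rewrite -subr_eq0; apply/eqP/fker; rewrite linearB /= gK subrr.
Qed.

Lemma factor_through V Q P (pi : {linear V -> Q}) (G0 : {linear V -> P}) :
  (forall q, exists x, pi x = q) -> (forall x, pi x = 0 -> G0 x = 0) ->
  {G : {linear Q -> P} | forall x, G (pi x) = G0 x}.
Proof.
move=> /surj_section [s sK] G0ker.
have G0s x : G0 (s (pi x)) = G0 x.
  apply/eqP; rewrite -subr_eq0 -linearB; apply/eqP/G0ker.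
  by rewrite linearB /= sK subrr.
have G_lin : linear (fun q => G0 (s q)).
  by move=> a q q'; rewrite -[q]sK -[q']sK -linearP !G0s linearP.
by exists (mklin G_lin) => x /=; apply: G0s.
Qed.

Section Bilinear.
Variables (M N P : lmodType R) (f : M -> N -> P).
Hypothesis f_bil : Defs.bilinear f.

Lemma bilinear_l y : linear (f^~ y). Proof. by move=> a x x'; case: f_bil => ->. Qed.
Lemma bilinear_r x : linear (f x). Proof. by move=> a y y'; case: f_bil => _ ->. Qed.

Lemma bil_suml I (r : seq I) (F : I -> M) y :
  f (\sum_(i <- r) F i) y = \sum_(i <- r) f (F i) y.
Proof. exact: (linear_sum (mklin (bilinear_l y))). Qed.
Lemma bil_sumr I (r : seq I) (F : I -> N) x :
  f x (\sum_(i <- r) F i) = \sum_(i <- r) f x (F i).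
Proof. exact: (linear_sum (mklin (bilinear_r x))). Qed.
Lemma bil_Zl a x y : f (a *: x) y = a *: f x y.
Proof. exact: (linearZZ (mklin (bilinear_l y))). Qed.
Lemma bil_Zr a x y : f x (a *: y) = a *: f x y.
Proof. exact: (linearZZ (mklin (bilinear_r x))). Qed.
Lemma bil_0l y : f 0 y = 0. Proof. exact: (linear0 (mklin (bilinear_l y))). Qed.
Lemma bil_0r x : f x 0 = 0. Proof. exact: (linear0 (mklin (bilinear_r x))). Qed.
Lemma bil_Dl x x' y : f (x + x') y = f x y + f x' y.
Proof. exact: (linearD (mklin (bilinear_l y))). Qed.
Lemma bil_Dr x y y' : f x (y + y') = f x y + f x y'.
Proof. exact: (linearD (mklin (bilinear_r x))). Qed.

End Bilinear.

Lemma fin_gen_fintype (V : lmodType R) (I : finType) (g : I -> V) :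
  (forall x, exists c : I -> R, x = \sum_i c i *: g i) -> fin_gen V.
Proof.
move=> gen; exists #|I|, (fun m => g (enum_val m)) => x.
have [c ->] := gen x; exists (fun m => c (enum_val m)).
rewrite (reindex (@enum_val _ predT)) //=.
by exists (@enum_rank _) => i _; [apply: enum_valK | apply: enum_rankK].
Qed.

Lemma tensor_unique (M N T1 T2 : lmodType R) (b1 : M -> N -> T1) (b2 : M -> N -> T2) :
  is_tensor b1 -> is_tensor b2 -> iso T1 T2.
Proof.
case=> b1_bil univ1 [b2_bil univ2].
have [g12 [e12 _]] := univ1 _ _ b2_bil.
have [g21 [e21 _]] := univ2 _ _ b1_bil.
have [g11 [_ uniq1]] := univ1 _ _ b1_bil.
have [g22 [_ uniq2]] := univ2 _ _ b2_bil.
have id_lin (T : lmodType R) : linear (fun t : T => t) by [].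
have g21K t : g21 (g12 t) = t.
  have -> : g21 (g12 t) = g11 t.
    by apply: (uniq1 (mklin (comp_linear g12 g21))) => x y /=; rewrite -e12 -e21.
  by rewrite -(uniq1 (mklin (id_lin T1))).
have g12K t : g12 (g21 t) = t.
  have -> : g12 (g21 t) = g22 t.
    by apply: (uniq2 (mklin (comp_linear g21 g12))) => x y /=; rewrite -e21 -e12.
  by rewrite -(uniq2 (mklin (id_lin T2))).
by exists g12, g21.
Qed.

End LinearMaps.

Section Noetherian.
Variable R : comUnitRingType.

Definition catf (T : Type) k l (u : 'I_k -> T) (v : 'I_l -> T) (t : 'I_(k + l)) : T :=
  match split t with inl i => u i | inr j => v j end.

Lemma catfP (T : Type) (P : T -> Prop) k l (u : 'I_k -> T) (v : 'I_l -> T) :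
  (forall i, P (u i)) -> (forall j, P (v j)) -> forall t, P (catf u v t).
Proof. by move=> Pu Pv t; rewrite /catf; case: (split t). Qed.

Lemma sum_catf (V : lmodType R) k l (c : 'I_k -> R) (d : 'I_l -> R) u v :
  \sum_t catf c d t *: catf u v t = \sum_i c i *: u i + \sum_j d j *: v j :> V.
Proof.
have splitl i : split (lshift l i) = inl i := unsplitK (inl i).
have splitr j : split (rshift k j) = inr j := unsplitK (inr j).
by rewrite big_split_ord; congr (_ + _); apply: eq_bigr => i _; rewrite /catf ?splitl ?splitr.
Qed.

Section ImageKernel.
Variables (V W : lmodType R) (f : {linear V -> W}) (S : V -> Prop).
Hypothesis S_submod : submod S.

Definition image_sub (y : W) : Prop := exists2 x, S x & f x = y.
Definition kernel_sub (x : V) : Prop := S x /\ f x = 0.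

Lemma submod_image : submod image_sub.
Proof.
split; first by exists 0; [apply: submod0 | apply: linear0].
split=> [_ _ [x Sx <-] [y Sy <-] | a _ [x Sx <-]].
  by exists (x + y); [apply: submodD | apply: linearD].
by exists (a *: x); [apply: submodZ | apply: linearZZ].
Qed.

Lemma submod_kernel : submod kernel_sub.
Proof.
split; first by split; [apply: submod0 | apply: linear0].
split=> [x y [Sx fx] [Sy fy] | a x [Sx fx]].
  by split; [apply: submodD | rewrite linearD fx fy addr0].
by split; [apply: submodZ | rewrite linearZZ fx scaler0].
Qed.

Lemma fg_extension : fg_submod image_sub -> fg_submod kernel_sub -> fg_submod S.
Proof.
move=> [k [u [Su genu]]] [l [w [Kw genw]]].
have /fin_all_exists [x Sx] : forall j, exists x, S x /\ f x = u j.
  by move=> j; case: (Su j) => x; exists x.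
exists (k + l)%N, (catf x w); split.
  by apply: catfP => [i | j]; [case: (Sx i) | case: (Kw j)].
move=> y Sy; have [c fy] := genu _ (ex_intro2 _ _ y Sy erefl).
have Kz : kernel_sub (y - \sum_i c i *: x i).
  split; first by apply: (submodB S_submod) => //; apply: (submod_span S_submod) => i; case: (Sx i).
  rewrite linearB linear_sum fy /=; apply/eqP; rewrite subr_eq0; apply/eqP/eq_bigr => i _.
  by rewrite linearZZ; case: (Sx i) => _ ->.
have [d zE] := genw _ Kz.
by exists (catf c d); rewrite sum_catf -zE addrC subrK.
Qed.

End ImageKernel.

Lemma fg_zero (V : lmodType R) (S : V -> Prop) :
  (forall x, S x -> x = 0) -> fg_submod S.
Proof.
move=> S0; exists 0%N, (fun=> 0); split=> [[] | x /S0 ->] //.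
by exists (fun=> 0); rewrite big_ord0.
Qed.

Definition comb_fun (V : lmodType R) n (g : 'I_n -> V) (u : 'rV[R]_n) : V :=
  \sum_i u 0 i *: g i.

Lemma comb_linear (V : lmodType R) n (g : 'I_n -> V) : linear (comb_fun g).
Proof.
move=> a u u'; rewrite /comb_fun scaler_sumr -big_split; apply: eq_bigr => i _.
by rewrite !mxE scalerDl scalerA.
Qed.

Definition comb (V : lmodType R) n (g : 'I_n -> V) := mklin (comb_linear g).

Hypothesis R_noeth : noetherian R.

Lemma noetherian_ideal_fg (I : R^o -> Prop) : submod I -> fg_submod I.
Proof.
move=> I_submod; have [k [g gen]] := R_noeth I_submod.
exists k, g; split=> [j | x /gen //]; apply/gen; exists (fun i => (i == j)%:R).
by rewrite (bigD1 j) //= eqxx mul1r big1 ?addr0 // => i /negbTE ->; rewrite mul0r.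
Qed.

(* Submodules of R^n are finitely generated: induction on n, splitting off
   the first coordinate and then the remaining ones (fg_extension twice). *)
Lemma noetherian_rows_fg n (S : 'rV[R]_n -> Prop) : submod S -> fg_submod S.
Proof.
elim: n S => [|n IH] S S_submod; first by apply: fg_zero => x _; apply: thinmx0.
have head_lin : linear (fun u : 'rV[R]_n.+1 => u 0 ord0 : R^o).
  by move=> a u v; rewrite !mxE.
have tail_lin : linear (fun u : 'rV[R]_n.+1 => \row_j u 0 (lift ord0 j)).
  by move=> a u v; apply/rowP => j; rewrite !mxE.
have K_submod := submod_kernel (mklin head_lin) S_submod.
have headS := noetherian_ideal_fg (submod_image (mklin head_lin) S_submod).
have tailK := IH _ (submod_image (mklin tail_lin) K_submod).
apply: (fg_extension S_submod headS).
apply: (fg_extension K_submod tailK).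
apply: fg_zero => u [[_ u0] /rowP ut]; apply/rowP => i; rewrite mxE.
by case: (unliftP ord0 i) => [j -> | ->] //; have := ut j; rewrite !mxE.
Qed.

(* Over a Noetherian ring, submodules of finitely generated modules are
   finitely generated: pull back along a surjection R^n -> V. *)
Lemma noetherian_fg_submod (V : lmodType R) n (g : 'I_n -> V) (S : V -> Prop) :
  generated_by g -> submod S -> fg_submod S.
Proof.
move=> gen S_submod.
have pre_submod : submod (fun u => S (comb g u)).
  split; first by rewrite linear0; apply: submod0.
  by split=> [u v Su Sv | a u Su]; rewrite ?linearD ?linearZZ; [apply: submodD | apply: submodZ].
have [k [w [Sw genw]]] := noetherian_rows_fg pre_submod.
exists k, (fun j => comb g (w j)); split=> // x Sx.
have [c cE] := gen x.
have xE : x = comb g (\row_i c i).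
  by rewrite cE /= /comb_fun; apply: eq_bigr => i _; rewrite mxE.
rewrite xE in Sx *; have [d ->] := genw _ Sx.
by exists d; rewrite linear_sum; apply: eq_bigr => j _; apply: linearZZ.
Qed.

End Noetherian.

Section Vasconcelos.
Variable R : comUnitRingType.
Hypothesis R_noeth : noetherian R.

(* Ascending chains of submodules of a finitely generated module over a
   Noetherian ring become stationary: their union is finitely generated,
   so it is reached at a finite stage. *)
Lemma chain_stationary (V : lmodType R) (C : nat -> V -> Prop) : fin_gen V ->
  (forall m, submod (C m)) -> (forall m x, C m x -> C m.+1 x) ->
  exists m, forall x, C m.+1 x -> C m x.
Proof.
move=> [n [g gen]] C_submod C_incr.
have C_mono a b x : (a <= b)%N -> C a x -> C b x.
  by move/subnK <-; elim: (b - a)%N => [|d IH] // Cx; apply/C_incr/IH.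
pose U x := exists m, C m x.
have U_submod : submod U.
  split; first by exists 0%N; apply: (submod0 (C_submod 0%N)).
  split=> [x y [a Cx] [b Cy] | r x [a Cx]]; last by exists a; apply: (submodZ (C_submod a)).
  exists (maxn a b); apply: (submodD (C_submod _)).
    by apply: (C_mono a) Cx; apply: leq_maxl.
  by apply: (C_mono b) Cy; apply: leq_maxr.
have [k [w [Uw genw]]] := noetherian_fg_submod R_noeth gen U_submod.
have [stage Cw] := fin_all_exists Uw.
exists (\max_(j < k) stage j) => x Cx.
have [c ->] := genw x (ex_intro _ _ Cx).
apply: (submod_span (C_submod _)) => j.
by apply: (C_mono (stage j)) => //; apply: (leq_bigmax j).
Qed.

Lemma iter_linear (V : lmodType R) (f : {linear V -> V}) m : linear (iter m f).
Proof. by elim: m => [//|m IH] a x y /=; rewrite IH linearP. Qed.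

(* The kernels of the iterates stabilise at
   some m; writing x = f^m y, f x = 0 puts y in ker f^(m+1) = ker f^m. *)
Lemma surjective_endo_injective (V : lmodType R) (f : {linear V -> V}) :
  fin_gen V -> (forall y, exists x, f x = y) -> forall x, f x = 0 -> x = 0.
Proof.
move=> V_fg fsurj.
pose C m x := iter m f x = 0.
have C_submod m : submod (C m) := submod_ker (mklin (iter_linear f m)).
have C_incr m x : C m x -> C m.+1 x by rewrite /C iterS => ->; apply: linear0.
have [m Cm] := chain_stationary V_fg C_submod C_incr.
have iter_surj y : exists x, iter m f x = y.
  elim: m y {Cm} => [|m' IH] y; first by exists y.
  have [z <-] := fsurj y; have [x <-] := IH z; by exists x.
move=> x fx0; have [y yx] := iter_surj x.
by have := Cm y; rewrite /C iterS yx => /(_ fx0).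
Qed.

End Vasconcelos.

Section PresentationTensor.
Variable R : comUnitRingType.

(* [p] presents N with relation matrix A, i.e. R^b --A--> R^n --p--> N --> 0
   is exact (row-vector convention, the first map is v |-> v *m A). *)
Definition presentation (N : lmodType R) n b (A : 'M[R]_(b, n))
    (p : {linear 'rV[R]_n -> N}) : Prop :=
  (forall y, exists u, p u = y) /\ (forall u, p u = 0 <-> exists v : 'rV[R]_b, u = v *m A).

Variables (L N : lmodType R) (n b : nat) (A : 'M[R]_(b, n)) (p : {linear 'rV[R]_n -> N}).
Hypothesis p_pres : presentation A p.

Definition relations (x : dsum L n) : Prop :=
  exists w : 'I_b -> L, forall i, x i = \sum_j A j i *: w j.

Lemma submod_relations : submod relations.
Proof.
split; first by exists (fun=> 0) => i; rewrite ffunE big1 // => j _; rewrite scaler0.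
split=> [x y [w xE] [w' yE] | a x [w xE]].
  exists (fun j => w j + w' j) => i; rewrite ffunE xE yE -big_split.
  by apply: eq_bigr => j _; rewrite scalerDr.
exists (fun j => a *: w j) => i; rewrite ffunE xE scaler_sumr.
by apply: eq_bigr => j _; rewrite !scalerA mulrC.
Qed.

(* [vec l u] is the element l (x) u of L (x) R^n = L^n. *)
Definition vec (l : L) (u : 'rV[R]_n) : dsum L n := [ffun i => u 0 i *: l].

Lemma vec_bilinear : Defs.bilinear vec.
Proof.
split=> [a l l' u | a l u u']; apply/ffunP => i; rewrite !ffunE ?mxE.
  by rewrite scalerDr !scalerA mulrC.
by rewrite scalerDl scalerA.
Qed.

Lemma vec_decomp (x : dsum L n) : x = \sum_i vec (x i) 'e_i.
Proof.
apply/ffunP => k; rewrite sum_ffunE (bigD1 k) //= big1 ?addr0.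
  by rewrite ffunE mxE !eqxx scale1r.
by move=> i /negbTE ik; rewrite ffunE mxE eqxx eq_sym ik scale0r.
Qed.

Lemma relations_vec (w : 'I_b -> L) (x : dsum L n) :
  (forall i, x i = \sum_j A j i *: w j) -> x = \sum_j vec (w j) ('e_j *m A).
Proof.
move=> xE; apply/ffunP => i; rewrite xE sum_ffunE.
by apply: eq_bigr => j _; rewrite ffunE -rowE mxE.
Qed.

Lemma relations_vecA l v : relations (vec l (v *m A)).
Proof.
exists (fun j => v 0 j *: l) => i; rewrite ffunE !mxE scaler_suml.
by apply: eq_bigr => j _; rewrite scalerA mulrC.
Qed.

Lemma fin_gen_dsum : fin_gen L -> fin_gen (dsum L n).
Proof.
move=> [k [g gen]].
apply: (fin_gen_fintype (g := fun ik : 'I_n * 'I_k => vec (g ik.2) 'e_ik.1)) => x.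
have /fin_all_exists [c cE] := fun i => gen (x i).
exists (fun ik => c ik.1 ik.2); rewrite {1}(vec_decomp x).
rewrite -(pair_bigA _ (fun i m => c i m *: vec (g m) 'e_i)) /=.
apply: eq_bigr => i _; rewrite {1}cE (bil_suml vec_bilinear).
by apply: eq_bigr => m _; rewrite (bil_Zl vec_bilinear).
Qed.

Section Model.
Variables (Q : lmodType R) (pi : {linear dsum L n -> Q}).
Hypotheses (pi_surj : forall q, exists x, pi x = q)
  (pi_ker : forall x, pi x = 0 <-> relations x).

Definition pres_lift : N -> 'rV[R]_n := sval (surj_section (proj1 p_pres)).
Lemma pres_liftK : cancel pres_lift p.
Proof. exact: svalP (surj_section (proj1 p_pres)). Qed.

Definition model_tensor (l : L) (y : N) : Q := pi (vec l (pres_lift y)).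

Lemma model_tensorE l u : model_tensor l (p u) = pi (vec l u).
Proof.
have /(proj2 p_pres) [v vE] : p (pres_lift (p u) - u) = 0.
  by rewrite linearB /= pres_liftK subrr.
rewrite /model_tensor -[pres_lift _](subrK u) vE (bil_Dr vec_bilinear) linearD /=.
by rewrite (proj2 (pi_ker _) (relations_vecA l v)) add0r.
Qed.

Lemma model_tensor_bilinear : Defs.bilinear model_tensor.
Proof.
split=> [a l l' y | a l y y'].
  by rewrite /model_tensor (bil_Dl vec_bilinear) (bil_Zl vec_bilinear) linearP.
rewrite -[y]pres_liftK -[y']pres_liftK -linearP !model_tensorE.
by case: vec_bilinear => _ ->; rewrite linearP.
Qed.

(* L^n / relations satisfies the universal property of L (x) N: a bilinear
   f induces x |-> sum_i f (x i) (p e_i) on L^n, which kills the relations. *)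
Lemma model_tensor_universal : is_tensor model_tensor.
Proof.
split=> [|P f f_bil]; first exact: model_tensor_bilinear.
pose G0 (x : dsum L n) := \sum_i f (x i) (p 'e_i).
have G0_lin : linear G0.
  move=> a x x'; rewrite /G0 scaler_sumr -big_split; apply: eq_bigr => i _.
  by rewrite !ffunE (bil_Dl f_bil) (bil_Zl f_bil).
have f_p l u : f l (p u) = G0 (vec l u).
  rewrite /G0 {1}(row_sum_delta u) linear_sum (bil_sumr f_bil); apply: eq_bigr => i _.
  by rewrite ffunE linearZZ (bil_Zr f_bil) (bil_Zl f_bil).
have G0_rel x : pi x = 0 -> G0 x = 0.
  move=> /pi_ker [w /relations_vec ->]; rewrite -[G0 _]/(mklin G0_lin _) linear_sum.
  apply: big1 => j _; rewrite /= -f_p.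
  have /(proj2 p_pres) -> : exists v : 'rV_b, 'e_j *m A = v *m A by exists 'e_j.
  exact: (bil_0r f_bil).
have [G G_pi] := factor_through (G0 := mklin G0_lin) pi_surj G0_rel.
exists G; split=> [l y | g' g'_f q]; first by rewrite /model_tensor G_pi /= -f_p pres_liftK.
have [x <-] := pi_surj q; rewrite G_pi {1}(vec_decomp x) !linear_sum /=.
by apply: eq_bigr => i _; rewrite -model_tensorE -g'_f.
Qed.

End Model.

Lemma presentation_tensor : exists (Q : lmodType R) (pi : {linear dsum L n -> Q})
    (t : L -> N -> Q),
  (forall q, exists x, pi x = q) /\ (forall x, pi x = 0 <-> relations x) /\ is_tensor t.
Proof.
have [Q [pi [pi_surj pi_ker]]] := quotient_exists submod_relations.
by exists Q, pi, (model_tensor pi); split=> //; split=> //; apply: model_tensor_universal.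
Qed.

End PresentationTensor.

Section TensorPower.
Variables (R : comUnitRingType) (L N : lmodType R) (mu b : nat) (A : 'M[R]_(b, mu))
  (p : {linear 'rV[R]_mu -> N}).
Hypothesis p_pres : presentation A p.

(* If the entries of A annihilate L, the relations vanish in L^mu, so L^mu
   itself is a tensor product of L and N. *)
Lemma dsum_tensor_of_ann : (forall j i, Ann L (A j i)) ->
  forall (T : lmodType R) (t : L -> N -> T), is_tensor t -> iso (dsum L mu) T.
Proof.
move=> A_ann T t t_tensor.
have [Q [pi [tQ [pi_surj [pi_ker tQ_tensor]]]]] := presentation_tensor L p_pres.
apply: (iso_trans _ (tensor_unique tQ_tensor t_tensor)).
apply: iso_of_linear pi_surj _ => x /pi_ker [w xE]; apply/ffunP => i.
by rewrite xE ffunE big1 // => j _; apply: A_ann.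
Qed.

(* Conversely, for L finitely generated over a Noetherian ring: if L^mu is
   L (x) N, then L^mu -->> L^mu / relations = L (x) N = L^mu is a surjective
   endomorphism, hence injective, so every relation l (x) (e_j A) vanishes. *)
Lemma ann_of_dsum_tensor : noetherian R -> fin_gen L ->
  (forall (T : lmodType R) (t : L -> N -> T), is_tensor t -> iso (dsum L mu) T) ->
  forall j i, Ann L (A j i).
Proof.
move=> R_noeth L_fg L_tensor j i l.
have [Q [pi [tQ [pi_surj [pi_ker tQ_tensor]]]]] := presentation_tensor L p_pres.
have [psi [psi' _ psi'K]] := iso_sym (L_tensor _ _ tQ_tensor).
pose h := mklin (comp_linear pi psi).
have h_surj y : exists x, h x = y.
  by have [x xE] := pi_surj (psi' y); exists x; rewrite /= xE psi'K.
have h_inj := surjective_endo_injective R_noeth (fin_gen_dsum mu L_fg) h_surj.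
have rel0 : vec l ('e_j *m A) = 0.
  by apply: h_inj; rewrite /= (proj2 (pi_ker _) (relations_vecA A l _)) linear0.
by have := congr1 (fun x : dsum L mu => x i) rel0; rewrite ffunE -rowE mxE ffunE.
Qed.

End TensorPower.

Section QuotientTensor.
Variables (R : comUnitRingType) (N : lmodType R) (I : R -> Prop).
Hypothesis I_ideal : is_ideal I.

Lemma submod_ideal : submod (I : R^o -> Prop).
Proof. by case: I_ideal => I0 [ID IM]; split=> //; split=> // a x; apply: IM. Qed.

Lemma ideal_mulr r s : I r -> I (r * s).
Proof. by case: I_ideal => _ [_ IM] Ir; rewrite mulrC; apply: IM. Qed.

Lemma submod_ideal_mul : submod (ideal_mul_sub I (N:=N)).
Proof.
split; first by exists 0%N, (fun=> 0), (fun=> 0); split=> [[] //|]; rewrite big_ord0.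
split=> [_ _ [k [c [y [Ic ->]]]] [l [d [z [Id ->]]]] | a _ [k [c [y [Ic ->]]]]].
  by exists (k + l)%N, (catf c d), (catf y z); split; [apply: catfP | rewrite sum_catf].
exists k, (fun m => a * c m), y; split=> [m | ]; first by rewrite mulrC; apply: ideal_mulr.
by rewrite scaler_sumr; apply: eq_bigr => m _; rewrite scalerA.
Qed.

Variables (RI NI : lmodType R) (pi : {linear R^o -> RI}) (q : {linear N -> NI}).
Hypotheses (pi_surj : forall z, exists r, pi r = z) (pi_ker : forall r, pi r = 0 <-> I r)
  (q_surj : forall w, exists y, q y = w) (q_ker : forall y, q y = 0 <-> ideal_mul_sub I y).

Lemma quot_scale_one r : r *: pi 1 = pi r.
Proof. by rewrite -linearZZ /= [_ *: _]mulr1. Qed.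

Lemma fin_gen_quot_ring : fin_gen RI.
Proof.
exists 1%N, (fun=> pi 1) => z; have [r <-] := pi_surj z.
by exists (fun=> r); rewrite big_ord1 quot_scale_one.
Qed.

Lemma Ann_quot_ring r : Ann RI r <-> I r.
Proof.
split=> [Ar | Ir z]; first by apply/pi_ker; rewrite -quot_scale_one Ar.
have [s <-] := pi_surj z; rewrite -quot_scale_one scalerA.
by rewrite quot_scale_one; apply/pi_ker/ideal_mulr.
Qed.

Definition quot_ring_lift : RI -> R := sval (surj_section pi_surj).
Lemma quot_ring_liftK : cancel quot_ring_lift pi.
Proof. exact: svalP (surj_section pi_surj). Qed.

Definition quot_tensor (z : RI) (y : N) : NI := q (quot_ring_lift z *: y).

Lemma quot_tensorE r y : quot_tensor (pi r) y = q (r *: y).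
Proof.
apply/eqP; rewrite -subr_eq0 -linearB -scalerBl; apply/eqP/q_ker.
exists 1%N, (fun=> quot_ring_lift (pi r) - r), (fun=> y); split; last by rewrite big_ord1.
by move=> _; apply/pi_ker; rewrite linearB /= quot_ring_liftK subrr.
Qed.

(* N / I N is a tensor product of R/I and N; a bilinear f factors through
   y |-> f (class of 1) y, which kills I N. *)
Lemma quot_tensor_universal : is_tensor quot_tensor.
Proof.
split=> [|P f f_bil].
  split=> [a z z' y | a z y y'].
    rewrite -[z]quot_ring_liftK -[z']quot_ring_liftK -linearP !quot_tensorE.
    by rewrite scalerDl -scalerA linearP.
  by rewrite /quot_tensor scalerDr linearD scalerA mulrC -scalerA linearZZ.
have f_one r y : f (pi r) y = r *: f (pi 1) y.
  by rewrite -quot_scale_one (bil_Zl f_bil).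
have G0_ker y : q y = 0 -> mklin (bilinear_r f_bil (pi 1)) y = 0.
  move=> /q_ker [k [c [z [Ic ->]]]] /=; rewrite (bil_sumr f_bil); apply: big1 => m _.
  by rewrite (bil_Zr f_bil) -f_one (proj2 (pi_ker _) (Ic m)) (bil_0l f_bil).
have [G G_q] := factor_through q_surj G0_ker.
exists G; split=> [z y | g' g'_f w].
  by rewrite -[z]quot_ring_liftK quot_tensorE G_q /= (bil_Zr f_bil) f_one.
by have [y <-] := q_surj w; rewrite G_q /= g'_f quot_tensorE scale1r.
Qed.

End QuotientTensor.

Section MinimalPresentation.
Variables (R : comUnitRingType) (N : lmodType R) (mu : nat).
Hypothesis mu_N : is_mu N mu.

(* Relations among a minimal generating family have non-unit coefficients:
   a unit coefficient would express g i through the other mu - 1 generators. *)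
Lemma minimal_relation_nonunit (g : 'I_mu -> N) : generated_by g ->
  forall u, comb g u = 0 -> forall i, maxideal (u 0 i).
Proof.
move=> gen u u0 i; apply/negP => ui.
have mu_pos : (0 < mu)%N by apply: leq_ltn_trans (ltn_ord i).
suff : (mu <= mu.-1)%N by rewrite leqNgt ltn_predL mu_pos.
apply: (proj2 mu_N mu.-1 (fun k => g (lift i k))) => x.
have [c ->] := gen x.
have giE : g i = - \sum_(k < mu.-1) ((u 0 i)^-1 * u 0 (lift i k)) *: g (lift i k).
  move: u0; rewrite /= /comb_fun (bigD1_ord i) //= => /eqP; rewrite addr_eq0 => /eqP ui_gi.
  rewrite -[g i]scale1r -(mulVr ui) -scalerA ui_gi scalerN scaler_sumr.
  by congr (- _); apply: eq_bigr => k _; rewrite scalerA.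
exists (fun k => c (lift i k) - c i * ((u 0 i)^-1 * u 0 (lift i k))).
rewrite (bigD1_ord i) //= giE scalerN scaler_sumr -sumrN -big_split /=.
by apply: eq_bigr => k _; rewrite scalerA -scaleNr -scalerDl addrC.
Qed.

(* Over a Noetherian ring every N with mu(N) = mu has a minimal presentation:
   the kernel of R^mu -->> N is finitely generated, and its generators have
   non-unit entries. *)
Lemma min_presentation_exists : noetherian R ->
  exists b (A : 'M[R]_(b, mu)), min_presentation N A.
Proof.
move=> R_noeth; have [[g gen] _] := mu_N.
have rows_gen : generated_by (fun i : 'I_mu => 'e_i : 'rV[R]_mu).
  by move=> u; exists (fun i => u 0 i); apply: row_sum_delta.
have [k [w [w_rel genw]]] := noetherian_fg_submod R_noeth rows_gen (submod_ker (comb g)).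
pose A := \matrix_(j < k, i < mu) w j 0 i.
have vA (v : 'rV[R]_k) : v *m A = \sum_j v 0 j *: w j.
  by apply/rowP => i; rewrite !mxE summxE; apply: eq_bigr => j _; rewrite !mxE.
exists k, A; split=> //; split.
  by move=> j i; rewrite mxE; apply: (minimal_relation_nonunit gen (w_rel j)).
exists (comb g); split.
  move=> y; have [c ->] := gen y; exists (\row_i c i).
  by rewrite /= /comb_fun; apply: eq_bigr => i _; rewrite mxE.
move=> u; split=> [/genw [c ->] | [v ->]]; last first.
  by rewrite vA; apply: (submod_span (submod_ker (comb g))).
by exists (\row_j c j); rewrite vA; apply: eq_bigr => j _; rewrite mxE.
Qed.

End MinimalPresentation.

Lemma ideal_Ann (R : comUnitRingType) (M : lmodType R) : is_ideal (Ann M).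
Proof.
split; first by move=> m; rewrite scale0r.
split=> [x y Ax Ay m | a x Ax m]; first by rewrite scalerDl Ax Ay addr0.
by rewrite -scalerA Ax scaler0.
Qed.

Theorem lemma3p1 (R : comUnitRingType) (M N : lmodType R) (mu : nat) :
  noetherian R -> local_ring R -> fin_gen M -> fin_gen N -> is_mu N mu ->
  let J := Ann M in
  let i1 := forall (T : lmodType R) (b : M -> N -> T),
              is_tensor b -> iso (dsum M mu) T in
  let i2 := exists (b : nat) (A : 'M[R]_(b, mu)),
              min_presentation N A /\ forall i j, J (A i j) in
  let i3 := forall L : lmodType R, (forall r, J r -> Ann L r) ->
              forall (T : lmodType R) (b : L -> N -> T),
                is_tensor b -> iso (dsum L mu) T in
  let i4 := forall (RJ NJ : lmodType R),
              @is_quotient R R^o RJ J -> @is_quotient R N NJ (ideal_mul_sub J (N:=N)) ->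
              iso (dsum RJ mu) NJ in
  [/\ (i1 <-> i2), (i2 <-> i3) & (i3 <-> i4)].
Proof.
move=> R_noeth _ M_fg _ mu_N J i1 i2 i3 i4.
have J_ideal : is_ideal J := ideal_Ann M.
have [b [A A_min]] := min_presentation_exists mu_N R_noeth.
have [_ [_ [p p_pres]]] := A_min.
have i1_i2 : i1 -> i2.
  by move=> h1; exists b, A; split=> //; apply: (ann_of_dsum_tensor p_pres R_noeth M_fg).
have i2_i3 : i2 -> i3.
  move=> [b' [A' [[_ [_ [p' p'_pres]]] A'_J]]] L L_J.
  by apply: (dsum_tensor_of_ann p'_pres) => j i; apply/L_J/A'_J.
have i3_i4 : i3 -> i4.
  move=> h3 RJ NJ [pi [pi_surj pi_ker]] [q [q_surj q_ker]].
  apply: (h3 _ _ _ _ (quot_tensor_universal pi_surj pi_ker q_surj q_ker)).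
  by move=> r /(Ann_quot_ring J_ideal pi_surj pi_ker).
have i4_i2 : i4 -> i2.
  move=> h4; exists b, A; split=> // j i.
  have [RJ RJ_quot] := quotient_exists (submod_ideal J_ideal).
  have [NJ NJ_quot] := quotient_exists (submod_ideal_mul N J_ideal).
  have [[pi [pi_surj pi_ker]] [q [q_surj q_ker]]] := (RJ_quot, NJ_quot).
  apply/(Ann_quot_ring J_ideal pi_surj pi_ker).
  apply: (ann_of_dsum_tensor p_pres R_noeth (fin_gen_quot_ring pi_surj)) => T t t_tensor.
  apply: (iso_trans (h4 _ _ RJ_quot NJ_quot)).
  exact: tensor_unique (quot_tensor_universal pi_surj pi_ker q_surj q_ker) t_tensor.
have i3_i1 : i3 -> i1 by move=> h3; apply: h3.
by split; split; auto.
Qed.
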